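(* Let $A,B\in\mathcal{M}_{n\times n}$ with $A\neq 0$. Then the following are equivalent: (i) $A\parallel B$ in the operator norm $\|\cdot\|_\infty$; (ii) there exist unit vectors $x,y\in\mathcal{M}_{n\times 1}$ such that $\|A\|_\infty = x^*Ay$ and $|x^*By|=\|B\|_\infty$; (iii) for any matrix $U\in\mathcal{M}_{n\times k}$ whose orthonormal columns form a basis of the eigenspace of $AA^*$ corresponding to its largest eigenvalue, with $V=\frac{1}{\|A\|_\infty}A^*U\in\mathcal{M}_{n\times k}$, one has $-\|B\|_\infty\in W(\lambda U^*BV)$ for some $\lambda\in\mathbb{T}$.
   Context: $\mathcal{M}_{m\times n}$ denotes complex $m\times n$ matrices; $\|A\|_\infty$ is the largest singular value of $A$ (operator norm). $\mathbb{T}=\{\alpha\in\mathbb{C}:|\alpha|=1\}$. $A\parallel B$ in a norm $\|\cdot\|$ means $\|A+\lambda B\|=\|A\|+\|B\|$ for some $\lambda\in\mathbb{T}$. For a square matrix $T\in\mathcal{M}_{k\times k}$, $W(T)=\{\zeta^*T\zeta:\zeta\in\mathcal{M}_{k\times 1},\ \|\zeta\|=1\}$ is its numerical range. *)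

From HB Require Import structures.
From mathcomp Require Import all_boot all_order all_algebra.
From mathcomp Require Import complex.
From mathcomp Require Import reals classical_sets.
Set Implicit Arguments. Unset Strict Implicit. Unset Printing Implicit Defensive.
Import Order.TTheory GRing.Theory Num.Theory.
Local Open Scope ring_scope.
Local Open Scope classical_set_scope.

Definition ctr (R : realType) m n (A : 'M[R[i]]_(m, n)) : 'M[R[i]]_(n, m) :=
  map_mx (@conjc R) A^T.

Definition vnorm (R : realType) n (x : 'cV[R[i]]_n) : R :=
  Num.sqrt (\sum_i (ComplexField.Normc.normc (x i 0)) ^+ 2).

Definition opnorm (R : realType) m n (A : 'M[R[i]]_(m, n)) : R :=
  sup [set vnorm (A *m x) | x in [set x : 'cV[R[i]]_n | vnorm x = 1]].

Definition sesq (R : realType) m n (x : 'cV[R[i]]_m) (T : 'M[R[i]]_(m, n))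
  (y : 'cV[R[i]]_n) : R[i] :=
  (ctr x *m T *m y) 0 0.

Definition opnorm_parallel (R : realType) m n (A B : 'M[R[i]]_(m, n)) : Prop :=
  exists lam : R[i], ComplexField.Normc.normc lam = 1 /\ opnorm (A + lam *: B) = opnorm A + opnorm B.

Definition numerical_range (R : realType) k (T : 'M[R[i]]_k) : set R[i] :=
  [set z | exists zeta : 'cV[R[i]]_k, vnorm zeta = 1 /\ sesq zeta T zeta = z].

(* eigenvalues (column-vector convention) *)
Definition is_eigenvalue (R : realType) n (M : 'M[R[i]]_n) (mu : R[i]) : Prop :=
  exists x : 'cV[R[i]]_n, x != 0 /\ M *m x = mu *: x.

Definition is_largest_eigenvalue (R : realType) n (M : 'M[R[i]]_n) (mu : R[i]) : Prop :=
  is_eigenvalue M mu /\ forall nu, is_eigenvalue M nu -> nu <= mu.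

From HB Require Import structures.
From mathcomp Require Import all_boot all_order all_algebra.
From mathcomp Require Import complex.
From mathcomp Require Import reals classical_sets.
From mathcomp Require Import spectral ring lra.
Import Order.TTheory GRing.Theory Num.Theory Num.Def ComplexField.Normc.
Set Implicit Arguments. Unset Strict Implicit. Unset Printing Implicit Defensive.
Local Open Scope ring_scope.

(* Write s = |A| and b = |B|.  If |A + lam B| = s + b, take a unit vector y
   with |(A + lam B) y| = s + b: equality throughout
   |A y + lam B y| <= |A y| + |B y| <= s + b forces |A y| = s, |B y| = b and
   <A y, lam B y> = s b, so x := A y / s gives x^* A y = s and |x^* B y| = b.
   Conversely, for such x, y and lam with lam (x^* B y) = b, the scalar
   x^* (A + lam B) y = s + b bounds |A + lam B| from below.
   Moreover x^* A y = s = |A| forces A y = s x and A^* x = s y, so x lies in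
   the top eigenspace (eigenvalue s^2) of A A^*, x = U c with |c| = 1, y = V c
   and x^* B y = c^* (U^* B V) c: rotating its phase to -b gives (iii), and
   reading this backwards gives (ii) from (iii). *)

Section InnerProduct.
Variable R : realType.
Local Notation C := R[i].

Lemma normcC (a : C) : (normc a)%:C%C = `|a|.
Proof. by []. Qed.

Lemma normc_ge0 (a : C) : 0 <= normc a.
Proof. by rewrite -lecR normcC normr_ge0. Qed.

Lemma normcR (r : R) : normc r%:C%C = `|r|.
Proof. by rewrite /= expr0n addr0 sqrtr_sqr. Qed.

Lemma normc_real (r : R) : 0 <= r -> normc r%:C%C = r.
Proof. by move=> r0; rewrite normcR ger0_norm. Qed.

Lemma conjC_realC (r : R) : (r%:C%C)^* = r%:C%C.
Proof. exact: conjc_real. Qed.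

Lemma normc_conj (a : C) : normc a^* = normc a.
Proof. by apply: complexI; rewrite !normcC normcJ. Qed.

Lemma Re_le_normc (a : C) : complex.Re a <= normc a.
Proof.
apply: le_trans (real_ler_norm (num_real _)) _.
by rewrite -lecR normcC; apply: normc_ge_Re.
Qed.

Lemma phase_align (w : C) : exists2 lam, normc lam = 1 & lam * w = (normc w)%:C%C.
Proof.
have [->|w_neq0] := eqVneq w 0.
  by exists 1; rewrite ?normc1 // mulr0 normc0.
have nw_neq0 : normc w != 0 by apply: contra w_neq0 => /eqP/eq0_normc ->.
exists ((normc w)%:C%C / w); last by rewrite divfK.
by rewrite normcM normcV normc_real ?normc_ge0 ?divff.
Qed.

Lemma ctrE m n (A : 'M[C]_(m, n)) : ctr A = map_mx conjC A^T.
Proof. by []. Qed.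

Lemma ctrK m n (A : 'M[C]_(m, n)) : ctr (ctr A) = A.
Proof. by apply/matrixP => i j; rewrite !ctrE !mxE conjCK. Qed.

Lemma ctrM m n p (A : 'M[C]_(m, n)) (B : 'M[C]_(n, p)) :
  ctr (A *m B) = ctr B *m ctr A.
Proof. by rewrite !ctrE trmx_mul map_mxM. Qed.

Lemma ctrD m n (A B : 'M[C]_(m, n)) : ctr (A + B) = ctr A + ctr B.
Proof. by rewrite !ctrE linearD map_mxD. Qed.

Lemma ctrZ m n a (A : 'M[C]_(m, n)) : ctr (a *: A) = a^* *: ctr A.
Proof. by rewrite !ctrE linearZ map_mxZ. Qed.

Definition dot n (x y : 'cV[C]_n) : C := (ctr x *m y) 0 0.

Lemma sesqE m n (x : 'cV[C]_m) (T : 'M[C]_(m, n)) y : sesq x T y = dot x (T *m y).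
Proof. by rewrite /sesq /dot mulmxA. Qed.

Lemma dotE n (x y : 'cV[C]_n) : dot x y = \sum_i (x i 0)^* * y i 0.
Proof. by rewrite /dot mxE; apply: eq_bigr => i _; rewrite ctrE !mxE. Qed.

Lemma dotC n (x y : 'cV[C]_n) : dot y x = (dot x y)^*.
Proof.
rewrite !dotE rmorph_sum; apply: eq_bigr => i _.
by rewrite rmorphM /= conjCK mulrC.
Qed.

Lemma dotDl n (x y z : 'cV[C]_n) : dot (x + y) z = dot x z + dot y z.
Proof. by rewrite /dot ctrD mulmxDl mxE. Qed.

Lemma dotDr n (x y z : 'cV[C]_n) : dot x (y + z) = dot x y + dot x z.
Proof. by rewrite /dot mulmxDr mxE. Qed.

Lemma dotZl n a (x y : 'cV[C]_n) : dot (a *: x) y = a^* * dot x y.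
Proof. by rewrite /dot ctrZ -scalemxAl mxE. Qed.

Lemma dotZr n a (x y : 'cV[C]_n) : dot x (a *: y) = a * dot x y.
Proof. by rewrite /dot -scalemxAr mxE. Qed.

Lemma dotBl n (x y z : 'cV[C]_n) : dot (x - y) z = dot x z - dot y z.
Proof. by rewrite -scaleN1r dotDl dotZl rmorphN1 mulN1r. Qed.

Lemma dotBr n (x y z : 'cV[C]_n) : dot x (y - z) = dot x y - dot x z.
Proof. by rewrite -scaleN1r dotDr dotZr mulN1r. Qed.

Lemma dot_mulmx m n (M : 'M[C]_(m, n)) x y : dot x (M *m y) = dot (ctr M *m x) y.
Proof. by rewrite /dot ctrM ctrK mulmxA. Qed.

Lemma vnorm_ge0 n (x : 'cV[C]_n) : 0 <= vnorm x.
Proof. exact: sqrtr_ge0. Qed.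

Lemma dotvv n (x : 'cV[C]_n) : dot x x = (vnorm x ^+ 2)%:C%C.
Proof.
rewrite sqr_sqrtr; last by apply: sumr_ge0 => i _; apply: sqr_ge0.
rewrite rmorph_sum dotE; apply: eq_bigr => i _.
by rewrite rmorphXn normCKC.
Qed.

Lemma vnorm_dotE n (x : 'cV[C]_n) r :
  0 <= r -> dot x x = (r ^+ 2)%:C%C -> vnorm x = r.
Proof.
by move=> r0; rewrite dotvv => /complexI /eqP; rewrite eqrXn2 ?vnorm_ge0 // => /eqP.
Qed.

Lemma vnorm_eq0 n (x : 'cV[C]_n) : (vnorm x == 0) = (x == 0).
Proof.
apply/eqP/eqP => [x0|->]; last by apply: vnorm_dotE; rewrite // /dot mulmx0 mxE expr0n.
have := dotvv x; rewrite x0 expr0n /= dotE => /eqP.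
rewrite psumr_eq0 => [/allP x_eq0|i _]; last by rewrite -normCKC exprn_ge0.
apply/matrixP => i j; rewrite ord1 mxE.
by move: (x_eq0 i (mem_index_enum i)); rewrite -normCKC sqrf_eq0 normr_eq0 => /eqP.
Qed.

Lemma vnorm0 n : vnorm (0 : 'cV[C]_n) = 0.
Proof. by apply/eqP; rewrite vnorm_eq0. Qed.

Lemma vnorm_gt0 n (x : 'cV[C]_n) : (0 < vnorm x) = (x != 0).
Proof. by rewrite lt_def vnorm_ge0 vnorm_eq0 andbT. Qed.

Lemma vnormZ n a (x : 'cV[C]_n) : vnorm (a *: x) = normc a * vnorm x.
Proof.
apply: vnorm_dotE; first by rewrite mulr_ge0 ?vnorm_ge0 ?normc_ge0.
by rewrite dotZl dotZr dotvv mulrA -normCKC exprMn -normcC [RHS]rmorphM /= !rmorphXn.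
Qed.

Lemma vnorm_isometry m n (U : 'M[C]_(m, n)) c :
  ctr U *m U = 1%:M -> vnorm (U *m c) = vnorm c.
Proof.
by move=> U1; apply: vnorm_dotE; rewrite ?vnorm_ge0 // dot_mulmx mulmxA U1 mul1mx dotvv.
Qed.

Lemma sqr_vnormD n (u v : 'cV[C]_n) :
  vnorm (u + v) ^+ 2 = vnorm u ^+ 2 + vnorm v ^+ 2 + 2 * complex.Re (dot u v).
Proof.
apply: complexI; rewrite -dotvv !rmorphD /= -!dotvv rmorphM /= complexRe ReE.
rewrite (rmorph_nat _ 2) mulrC divfK ?pnatr_eq0 // dotDl !dotDr (dotC u v); ring.
Qed.

Lemma normc_dot_le n (x y : 'cV[C]_n) : normc (dot x y) <= vnorm x * vnorm y.
Proof.
have [->|y0] := eqVneq y 0.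
  by rewrite /dot mulmx0 mxE normc0 mulr_ge0 ?vnorm_ge0.
pose p := (vnorm y ^+ 2)%:C%C; pose q := dot y x.
have p_gt0 : 0 < p by rewrite ltcR exprn_gt0 // vnorm_gt0.
have : 0 <= dot (p *: x - q *: y) (p *: x - q *: y) by rewrite dotvv lecR sqr_ge0.
have -> : dot (p *: x - q *: y) (p *: x - q *: y) = p * (p * dot x x - q * q^*).
  rewrite dotBl !dotBr !dotZl !dotZr (dotC y x) -/q !dotvv -/p conjC_realC.
  by rewrite /p; ring.
rewrite pmulr_rge0 // subr_ge0 -normCK dotvv -rmorphXn -!rmorphM lecR.
rewrite -(ler_sqr (normc_ge0 _)) ?nnegrE ?mulr_ge0 ?vnorm_ge0 //.
by rewrite dotC normc_conj exprMn mulrC.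
Qed.

Lemma dot_diag_le n (d : 'rV[C]_n) (j : 'I_n) (w : 'cV[C]_n) :
  (forall i, d 0 i <= d 0 j) -> dot w (diag_mx d *m w) <= d 0 j * dot w w.
Proof.
move=> d_le; rewrite !dotE mulr_sumr; apply: ler_sum => i _.
rewrite mul_diag_mx mxE mulrCA.
by apply: ler_wpM2r; [rewrite mulrC -normCK exprn_ge0 | exact: d_le].
Qed.

Lemma vnorm_delta n (j : 'I_n) : vnorm (delta_mx j 0 : 'cV[C]_n) = 1.
Proof.
apply: vnorm_dotE => //; rewrite dotE (bigD1 j) //= big1 => [|i /negPf ij].
  by rewrite !mxE !eqxx conjC1 mulr1 addr0 expr1n.
by rewrite !mxE ij mulr0.
Qed.

Lemma vnormD n (u v : 'cV[C]_n) : vnorm (u + v) <= vnorm u + vnorm v.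
Proof.
rewrite -(ler_sqr (vnorm_ge0 _)) ?nnegrE ?addr_ge0 ?vnorm_ge0 // sqr_vnormD sqrrD.
have := le_trans (Re_le_normc (dot u v)) (normc_dot_le u v); lra.
Qed.

Lemma vnormD_eq n (u v : 'cV[C]_n) :
  vnorm (u + v) = vnorm u + vnorm v -> normc (dot u v) = vnorm u * vnorm v.
Proof.
move=> /(congr1 (fun r => r ^+ 2)); rewrite sqr_vnormD sqrrD => uv.
apply/le_anti; rewrite normc_dot_le /=.
by apply: le_trans (Re_le_normc _); lra.
Qed.

Lemma dot_eq_scale n (u z : 'cV[C]_n) s :
  vnorm u <= s -> vnorm z = 1 -> dot z u = s%:C%C -> u = s%:C%C *: z.
Proof.
move=> us z1 zu; have s0 : 0 <= s := le_trans (vnorm_ge0 u) us.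
apply/eqP; rewrite -subr_eq0 -vnorm_eq0 -sqrf_eq0 eq_le sqr_ge0 andbT.
rewrite -scaleNr -rmorphN sqr_vnormD vnormZ z1 normcR normrN ger0_norm // mulr1.
rewrite dotZr (dotC z u) zu conjC_realC -rmorphM /=.
have := vnorm_ge0 u; nra.
Qed.

End InnerProduct.

Section OperatorNorm.
Variable R : realType.
Local Notation C := R[i].
Local Open Scope classical_set_scope.

Lemma hermitian_unitary_diag n (G : 'M[C]_n) : ctr G = G ->
  exists (Q : 'M[C]_n) (d : 'rV[C]_n),
    [/\ ctr Q *m Q = 1%:M, Q *m ctr Q = 1%:M & G = Q *m diag_mx d *m ctr Q].
Proof.
move=> G_herm; have /orthomx_spectralP GE : G \is normalmx.
  by apply/normalmxP; rewrite -ctrE G_herm.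
have P_unitary := spectral_unitarymx G.
have QQ : ctr (ctr (spectralmx G)) *m ctr (spectralmx G) = 1%:M.
  by rewrite ctrK; apply/unitarymxP.
exists (ctr (spectralmx G)), (spectral_diag G); split => //; first exact: mulmx1C.
by rewrite ctrK {1}GE invmx_unitary.
Qed.

(* In an orthonormal eigenbasis of [ctr M *m M], the basis vector with the
   largest eigenvalue maximises the Rayleigh quotient |M x|^2 / |x|^2. *)
Lemma exists_top_singular_vector m n (M : 'M[C]_(m, n)) : (0 < n)%N ->
  exists2 y, vnorm y = 1 & forall x, vnorm (M *m x) <= vnorm (M *m y) * vnorm x.
Proof.
move=> n_gt0.
have G_herm : ctr (ctr M *m M) = ctr M *m M by rewrite ctrM ctrK.
have [Q [d [QQ QQ' GE]]] := hermitian_unitary_diag G_herm.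
have rayleigh x : dot x (ctr M *m M *m x) = (vnorm (M *m x) ^+ 2)%:C%C.
  by rewrite -mulmxA dot_mulmx ctrK dotvv.
pose z j : 'cV[C]_n := Q *m delta_mx j 0.
have z1 j : vnorm (z j) = 1.
  by rewrite vnorm_isometry // vnorm_delta.
have Dz j : diag_mx d *m delta_mx j 0 = d 0 j *: (delta_mx j 0 : 'cV_n).
  by apply/matrixP => i k; rewrite mul_diag_mx !mxE; case: eqP => [->|_]; rewrite ?mulr0.
have dz j : d 0 j = (vnorm (M *m z j) ^+ 2)%:C%C.
  rewrite -rayleigh GE -!mulmxA (mulmxA (ctr Q)) QQ mul1mx Dz -scalemxAr -/(z j).
  by rewrite dotZr dotvv z1 expr1n mulr1.
have [j _ j_max] := @arg_maxP _ _ 'I_n (Ordinal n_gt0) xpredT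
  (fun j => vnorm (M *m z j) ^+ 2) isT.
exists (z j) => // x.
rewrite -(ler_sqr (vnorm_ge0 _)) ?nnegrE ?mulr_ge0 ?vnorm_ge0 // exprMn.
rewrite -lecR -rayleigh [X in _ <= X]rmorphM /= -(dz j) -dotvv GE -!mulmxA dot_mulmx.
rewrite -[dot x x](_ : dot (ctr Q *m x) (ctr Q *m x) = _).
  by apply: dot_diag_le => i; rewrite !dz lecR; apply: j_max.
by rewrite -dot_mulmx mulmxA QQ' mul1mx.
Qed.

Lemma ncols_gt0 m n (M : 'M[C]_(m, n)) : M != 0 -> (0 < n)%N.
Proof. by case: n M => // M; rewrite [M]thinmx0 eqxx. Qed.

Lemma opnorm_dim0 m (M : 'M[C]_(m, 0)) : opnorm M = 0.
Proof.
rewrite /opnorm [X in sup X](_ : _ = set0) ?sup0 //.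
apply/seteqP; split => // _ [x /= x1 _].
by move: (vnorm_eq0 x); rewrite x1 oner_eq0 [x]flatmx0 eqxx.
Qed.

Lemma opnormP m n (M : 'M[C]_(m, n)) : (0 < n)%N -> exists y,
  [/\ vnorm y = 1, vnorm (M *m y) = opnorm M & forall x, vnorm (M *m x) <= opnorm M * vnorm x].
Proof.
move=> n_gt0; have [y y1 y_max] := exists_top_singular_vector M n_gt0.
suff -> : opnorm M = vnorm (M *m y) by exists y.
apply/le_anti/andP; split.
  by apply: ge_sup => [|_ [x /= x1 <-]]; [exists (vnorm (M *m y)), y | rewrite -[_ (M *m y)]mulr1 -x1].
apply: ub_le_sup; last by exists y.
by exists (vnorm (M *m y)) => _ [x /= x1 <-]; rewrite -[_ (M *m y)]mulr1 -x1.
Qed.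

Lemma vnorm_mulmx_le m n (M : 'M[C]_(m, n)) x : vnorm (M *m x) <= opnorm M * vnorm x.
Proof.
case: n M x => [|n] M x; first by rewrite [x]flatmx0 mulmx0 !vnorm0 mulr0.
by have [y [_ _]] := opnormP M isT; apply.
Qed.

Lemma opnorm_ge0 m n (M : 'M[C]_(m, n)) : 0 <= opnorm M.
Proof.
case: n M => [|n] M; first by rewrite opnorm_dim0.
by have [y [_ <- _]] := opnormP M isT; apply: vnorm_ge0.
Qed.

Lemma opnorm_gt0 m n (M : 'M[C]_(m, n)) : M != 0 -> 0 < opnorm M.
Proof.
rewrite lt_def opnorm_ge0 andbT; apply: contraNneq => M0.
have Mx0 (x : 'cV_n) : M *m x = 0.
  apply/eqP; rewrite -vnorm_eq0 eq_le vnorm_ge0 andbT.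
  by have := vnorm_mulmx_le M x; rewrite M0 mul0r.
apply/eqP/matrixP => i j; move: (Mx0 (delta_mx j 0)).
by rewrite -colE => /matrixP /(_ i 0); rewrite !mxE.
Qed.

Lemma opnorm_ub m n (M : 'M[C]_(m, n)) c :
  0 <= c -> (forall x, vnorm (M *m x) <= c * vnorm x) -> opnorm M <= c.
Proof.
case: n M => [|n] M c0 Mc; first by rewrite opnorm_dim0.
by have [y [y1 <- _]] := opnormP M isT; rewrite -[c]mulr1 -y1.
Qed.

Lemma opnormD m n (M N : 'M[C]_(m, n)) : opnorm (M + N) <= opnorm M + opnorm N.
Proof.
apply: opnorm_ub => [|x]; first by rewrite addr_ge0 ?opnorm_ge0.
rewrite mulmxDl mulrDl; apply: le_trans (vnormD _ _) _.
by rewrite lerD ?vnorm_mulmx_le.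
Qed.

Lemma opnormZ_le m n a (M : 'M[C]_(m, n)) : opnorm (a *: M) <= normc a * opnorm M.
Proof.
apply: opnorm_ub => [|x]; first by rewrite mulr_ge0 ?normc_ge0 ?opnorm_ge0.
by rewrite -scalemxAl vnormZ -mulrA ler_wpM2l ?normc_ge0 ?vnorm_mulmx_le.
Qed.

Lemma normc_sesq_le m n x (M : 'M[C]_(m, n)) y :
  normc (sesq x M y) <= vnorm x * (opnorm M * vnorm y).
Proof.
rewrite sesqE; apply: le_trans (normc_dot_le _ _) _.
by rewrite ler_wpM2l ?vnorm_ge0 ?vnorm_mulmx_le.
Qed.

Lemma vnorm_ctr_mulmx_le m n (M : 'M[C]_(m, n)) x :
  vnorm (ctr M *m x) <= opnorm M * vnorm x.
Proof.
set w := ctr M *m x.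
have [w0|w_neq0] := eqVneq w 0; first by rewrite w0 vnorm0 mulr_ge0 ?opnorm_ge0 ?vnorm_ge0.
have : vnorm w ^+ 2 <= vnorm x * (opnorm M * vnorm w).
  rewrite -[_ ^+ 2]normc_real ?sqr_ge0 // -dotvv -dot_mulmx -sesqE.
  exact: normc_sesq_le.
by rewrite expr2 mulrCA mulrA ler_pM2r ?vnorm_gt0 // mulrC.
Qed.

End OperatorNorm.

Section LargestEigenvalue.
Variable R : realType.
Local Notation C := R[i].

Lemma is_largest_eigenvalue_unique n (M : 'M[C]_n) mu nu :
  is_largest_eigenvalue M mu -> is_largest_eigenvalue M nu -> mu = nu.
Proof. by move=> [mu_eig mu_max] [nu_eig nu_max]; apply/le_anti; rewrite mu_max ?nu_max. Qed.

Lemma ctr_mulmx_opnorm_eigen m n (M : 'M[C]_(m, n)) y :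
  vnorm y = 1 -> vnorm (M *m y) = opnorm M ->
  ctr M *m M *m y = (opnorm M ^+ 2)%:C%C *: y.
Proof.
move=> y1 My; rewrite -mulmxA; apply: dot_eq_scale => //.
  by rewrite expr2 -{2}My vnorm_ctr_mulmx_le.
by rewrite dot_mulmx ctrK dotvv My.
Qed.

Lemma eigenvalue_mulmx_ctr_le m n (A : 'M[C]_(m, n)) nu :
  is_eigenvalue (A *m ctr A) nu -> nu <= (opnorm A ^+ 2)%:C%C.
Proof.
move=> [x [x_neq0 Ax]].
have x_gt0 : 0 < vnorm x by rewrite vnorm_gt0.
have nu_x : nu * (vnorm x ^+ 2)%:C%C = (vnorm (ctr A *m x) ^+ 2)%:C%C.
  by rewrite -!dotvv -dotZr -Ax -mulmxA dot_mulmx.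
have -> : nu = (vnorm (ctr A *m x) ^+ 2 / vnorm x ^+ 2)%:C%C.
  have x2_neq0 : (vnorm x ^+ 2)%:C%C != 0 :> C.
    by rewrite -(rmorph0 (real_complex R)) (inj_eq (@complexI _)) expf_eq0 gt_eqF.
  by rewrite fmorph_div /= -nu_x mulfK.
rewrite lecR ler_pdivrMr ?exprn_gt0 // -exprMn ler_sqr ?nnegrE ?vnorm_ge0 //.
  exact: vnorm_ctr_mulmx_le.
by rewrite mulr_ge0 ?opnorm_ge0 ?vnorm_ge0.
Qed.

Lemma is_largest_eigenvalue_mulmx_ctr m n (A : 'M[C]_(m, n)) :
  A != 0 -> is_largest_eigenvalue (A *m ctr A) (opnorm A ^+ 2)%:C%C.
Proof.
move=> A_neq0; split; last exact: eigenvalue_mulmx_ctr_le.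
have [y [y1 Ay _]] := opnormP A (ncols_gt0 A_neq0).
exists (A *m y); split; first by rewrite -vnorm_gt0 Ay opnorm_gt0.
by rewrite -!mulmxA (mulmxA (ctr A)) ctr_mulmx_opnorm_eigen // scalemxAr.
Qed.

Lemma eigenspace_onb n (M : 'M[C]_n) (mu : C) : exists k (U : 'M[C]_(n, k)),
  ctr U *m U = 1%:M /\
  forall x : 'cV[C]_n, M *m x = mu *: x <-> exists c : 'cV[C]_k, x = U *m c.
Proof.
pose E := eigenspace M^T mu.
pose Q := schmidt (row_base E).
have QQ : Q *m map_mx conjC Q^T = 1%:M.
  by apply/unitarymxP/schmidt_unitarymx/rank_leq_col.
have QE : (Q :=: E)%MS.
  exact: eqmx_trans (eqmx_schmidt_free (row_base_free E)) (eq_row_base E).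
exists (\rank E), Q^T; split.
  by move/(congr1 trmx): QQ; rewrite trmx_mul trmx1 map_trmx trmxK ctrE trmxK.
move=> x; split.
  move=> /(congr1 trmx); rewrite trmx_mul linearZ /= => /eigenspaceP.
  by rewrite -QE => /submxP [D DE]; exists D^T; rewrite -[x]trmxK DE trmx_mul.
move=> [c ->]; apply: trmx_inj; rewrite trmx_mul linearZ /=.
by apply/eigenspaceP; rewrite -QE trmx_mul trmxK submxMl.
Qed.

End LargestEigenvalue.

Section Parallelism.
Variable R : realType.
Local Notation C := R[i].
Variables (m n : nat) (A B : 'M[C]_(m, n)).

Definition common_norming_pair : Prop :=
  exists x y, vnorm x = 1 /\ vnorm y = 1 /\
    sesq x A y = (opnorm A)%:C%C /\ normc (sesq x B y) = opnorm B.

Lemma common_norming_pair_parallel : common_norming_pair -> opnorm_parallel A B.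
Proof.
move=> [x [y [x1 [y1 [xAy xBy]]]]].
have [lam lam1 lam_xBy] := phase_align (sesq x B y).
exists lam; split; first exact: lam1.
apply/le_anti/andP; split.
  apply: le_trans (opnormD _ _) _; rewrite lerD2l.
  by apply: le_trans (opnormZ_le _ _) _; rewrite lam1 mul1r.
have := normc_sesq_le x (A + lam *: B) y; rewrite x1 y1 mul1r mulr1.
apply: le_trans; rewrite !sesqE mulmxDl -scalemxAl dotDr dotZr -!sesqE.
by rewrite xAy lam_xBy xBy -rmorphD normc_real // addr_ge0 ?opnorm_ge0.
Qed.

Hypothesis A_neq0 : A != 0.

Let s_gt0 : 0 < opnorm A := opnorm_gt0 A_neq0.

Lemma parallel_common_norming_pair : opnorm_parallel A B -> common_norming_pair.
Proof.
move=> [lam [lam1 norm_sum]].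
have [y [y1 y_max _]] := opnormP (A + lam *: B) (ncols_gt0 A_neq0).
rewrite norm_sum mulmxDl -scalemxAl in y_max.
set u := A *m y in y_max; set v := lam *: (B *m y) in y_max.
have u_le : vnorm u <= opnorm A by rewrite -[opnorm A]mulr1 -y1 vnorm_mulmx_le.
have v_le : vnorm v <= opnorm B.
  by rewrite vnormZ lam1 mul1r -[opnorm B]mulr1 -y1 vnorm_mulmx_le.
have sum_le := vnormD u v.
have u_eq : vnorm u = opnorm A.
  by apply/le_anti; rewrite u_le -(lerD2r (opnorm B)) -y_max (le_trans sum_le) ?lerD2l.
have v_eq : vnorm v = opnorm B.
  by apply/le_anti; rewrite v_le -(lerD2l (opnorm A)) -y_max -u_eq.
have uv : normc (dot u v) = opnorm A * opnorm B.
  by rewrite vnormD_eq u_eq ?v_eq // y_max.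
have lam_neq0 : lam != 0.
  by apply: contra_eqN lam1 => /eqP ->; rewrite normc0 eq_sym oner_eq0.
have s_neq0 : opnorm A != 0 := lt0r_neq0 s_gt0.
exists ((opnorm A)^-1%:C%C *: u), y; split.
  by rewrite vnormZ normc_real ?invr_ge0 ?opnorm_ge0 // u_eq mulVf.
split; first exact: y1.
split.
  rewrite sesqE dotZl conjC_realC dotvv u_eq -rmorphM /= expr2 mulKf //.
rewrite sesqE (_ : B *m y = lam^-1 *: v); last by rewrite scalerA mulVf ?scale1r.
rewrite dotZl dotZr conjC_realC !normcM normcV.
rewrite lam1 invr1 mul1r uv normc_real; last by rewrite invr_ge0 opnorm_ge0.
exact: mulKf.
Qed.

Lemma common_norming_pair_numerical_range k (U : 'M[C]_(m, k)) mu :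
  common_norming_pair -> is_largest_eigenvalue (A *m ctr A) mu -> ctr U *m U = 1%:M ->
  (forall x : 'cV_m, A *m ctr A *m x = mu *: x <-> exists c : 'cV_k, x = U *m c) ->
  exists lam, normc lam = 1 /\ numerical_range
    (lam *: (ctr U *m B *m ((opnorm A)^-1%:C%C *: (ctr A *m U)))) (- (opnorm B)%:C%C).
Proof.
move=> [x [y [x1 [y1 [xAy xBy]]]]] mu_max U_orth U_span.
have Ay : A *m y = (opnorm A)%:C%C *: x.
  by apply: dot_eq_scale; rewrite -?sesqE // -[opnorm A]mulr1 -y1 vnorm_mulmx_le.
have Ax : ctr A *m x = (opnorm A)%:C%C *: y.
  apply: dot_eq_scale => //; first by rewrite -[opnorm A]mulr1 -x1 vnorm_ctr_mulmx_le.
  by rewrite dot_mulmx ctrK dotC -sesqE xAy conjC_realC.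
have mu_eq := is_largest_eigenvalue_unique mu_max (is_largest_eigenvalue_mulmx_ctr A_neq0).
have [c xE] : exists c, x = U *m c.
  by apply/U_span; rewrite mu_eq -mulmxA Ax -scalemxAr Ay scalerA -rmorphM.
have [lam lam1 lam_xBy] := phase_align (sesq x B y).
exists (- lam); split; first by rewrite normcN.
exists c; split; first by rewrite -(vnorm_isometry c U_orth) -xE.
rewrite sesqE -scalemxAl dotZr -!mulmxA -scalemxAl -mulmxA -xE Ax scalerA.
rewrite -rmorphM mulVf ?gt_eqF // scale1r dot_mulmx ctrK -xE -sesqE.
by rewrite mulNr lam_xBy xBy.
Qed.

Lemma numerical_range_common_norming_pair k (U : 'M[C]_(m, k)) :
  ctr U *m U = 1%:M ->
  (forall x : 'cV_m,
     A *m ctr A *m x = (opnorm A ^+ 2)%:C%C *: x <-> exists c : 'cV_k, x = U *m c) ->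
  (exists lam, normc lam = 1 /\ numerical_range
    (lam *: (ctr U *m B *m ((opnorm A)^-1%:C%C *: (ctr A *m U)))) (- (opnorm B)%:C%C)) ->
  common_norming_pair.
Proof.
move=> U_orth U_span [lam [lam1 [c [c1 c_sesq]]]].
set x := U *m c.
have x_eigen : A *m ctr A *m x = (opnorm A ^+ 2)%:C%C *: x by apply/U_span; exists c.
have x1 : vnorm x = 1 by rewrite vnorm_isometry.
have Ax : vnorm (ctr A *m x) = opnorm A.
  apply: vnorm_dotE; first exact: opnorm_ge0.
  by rewrite -dot_mulmx mulmxA x_eigen dotZr dotvv x1 expr1n mulr1.
have s_neq0 : opnorm A != 0 := lt0r_neq0 s_gt0.
have yE : (opnorm A)^-1%:C%C *: (ctr A *m U) *m c = (opnorm A)^-1%:C%C *: (ctr A *m x).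
  by rewrite -scalemxAl -mulmxA.
move: c_sesq; rewrite sesqE -scalemxAl dotZr -!mulmxA dot_mulmx ctrK -sesqE yE.
move=> /(congr1 (@normc _)); rewrite normcM lam1 mul1r normcN.
rewrite normc_real ?opnorm_ge0 // => xBy.
exists x, ((opnorm A)^-1%:C%C *: (ctr A *m x)); split => //; split.
  by rewrite vnormZ Ax normc_real ?invr_ge0 ?opnorm_ge0 ?mulVf.
split => //.
rewrite sesqE -scalemxAr dotZr mulmxA x_eigen dotZr dotvv x1 expr1n mulr1.
by rewrite -rmorphM expr2 mulKf.
Qed.

End Parallelism.

Theorem proposition3p1 (R : realType) (n : nat) (A B : 'M[R[i]]_n) :
  A != 0 ->
  (opnorm_parallel A B <->
   (exists x y : 'cV[R[i]]_n, vnorm x = 1 /\ vnorm y = 1 /\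
      sesq x A y = ((opnorm A)%:C)%C /\ normc (sesq x B y) = opnorm B)) /\
  (opnorm_parallel A B <->
   (forall (k : nat) (U : 'M[R[i]]_(n, k)) (mu : R[i]),
      is_largest_eigenvalue (A *m ctr A) mu ->
      ctr U *m U = 1%:M ->
      (forall x : 'cV[R[i]]_n,
         A *m ctr A *m x = mu *: x <-> exists c : 'cV[R[i]]_k, x = U *m c) ->
      let V := ((opnorm A)^-1%:C)%C *: (ctr A *m U) in
      exists lam : R[i], normc lam = 1 /\
        numerical_range (lam *: (ctr U *m B *m V)) (- ((opnorm B)%:C)%C))).
Proof.
move=> A_neq0.
have parallel_iff : opnorm_parallel A B <-> common_norming_pair A B.
  by split; [exact: parallel_common_norming_pair | exact: common_norming_pair_parallel].
split; first exact: parallel_iff.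
rewrite parallel_iff; split => [pair k U mu mu_max U_orth U_span | nr_cond].
  exact (common_norming_pair_numerical_range A_neq0 pair mu_max U_orth U_span).
have [k [U [U_orth U_span]]] := eigenspace_onb (A *m ctr A) (opnorm A ^+ 2)%:C%C.
apply: (numerical_range_common_norming_pair A_neq0 U_orth U_span).
exact (nr_cond k U _ (is_largest_eigenvalue_mulmx_ctr A_neq0) U_orth U_span).
Qed.
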